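(* For all positive integers $n,d$ there exists a term $t_{n,d}$ in $n$ variables in the language $\{0,1,\vee,\wedge,-\}$ such that for every co-Heyting algebra $L$ generated by some $a\in L^n$, the ideal $dL$ is principal and $t_{n,d}(a)=\varepsilon_d(L)$.
   Context: A co-Heyting algebra is a bounded distributive lattice $(L,0,1,\vee,\wedge)$ such that $a-b=\min\{c\in L: a\le b\vee c\}$ exists for all $a,b$. $\operatorname{Spec}L$ is the set of prime filters ordered by inclusion; the height of a prime filter is its foundation rank there (rank $\ge\beta+1$ iff some strictly smaller prime filter has rank $\ge\beta$; limits by intersection); $\operatorname{codim}_La=\min\{\operatorname{height}\mathfrak p: a\in\mathfrak p\}$ ($+\infty$ if none). $dL=\{a\in L:\operatorname{codim}_La\ge d\}$ is an ideal, and $\varepsilon_d(L)$ denotes its generator when it is principal. *)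

From Stdlib Require Import Arith.

Set Implicit Arguments.
Unset Strict Implicit.

(* A co-Heyting algebra: a bounded distributive lattice (0,1,join,meet)
   together with a difference  a - b = min { c | a <= b \/ c }. *)
Record coHeytingAlgebra := CoHeyting {
  car :> Type;
  zero : car;
  one : car;
  join : car -> car -> car;
  meet : car -> car -> car;
  diff : car -> car -> car;
  joinA : forall a b c, join a (join b c) = join (join a b) c;
  joinC : forall a b, join a b = join b a;
  meetA : forall a b c, meet a (meet b c) = meet (meet a b) c;
  meetC : forall a b, meet a b = meet b a;
  join_meet_absorb : forall a b, join a (meet a b) = a;
  meet_join_absorb : forall a b, meet a (join a b) = a;
  meet_join_distr : forall a b c, meet a (join b c) = join (meet a b) (meet a c);
  join0 : forall a, join a zero = a;
  meet1 : forall a, meet a one = a;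
  (* order: x <= y  iff  meet x y = x *)
  diff_cover : forall a b, meet a (join b (diff a b)) = a;
  diff_min : forall a b c, meet a (join b c) = a -> meet (diff a b) c = diff a b
}.

Definition le (L : coHeytingAlgebra) (x y : L) : Prop := meet x y = x.

Inductive term (n : nat) : Type :=
| tVar : forall i : nat, i < n -> term n
| tZero : term n
| tOne : term n
| tJoin : term n -> term n -> term n
| tMeet : term n -> term n -> term n
| tDiff : term n -> term n -> term n.

Fixpoint eval (n : nat) (L : coHeytingAlgebra) (a : forall i : nat, i < n -> L)
  (t : term n) : L :=
  match t with
  | @tVar _ i Hi => a i Hi
  | tZero _ => zero L
  | tOne _ => one L
  | tJoin t1 t2 => join (eval a t1) (eval a t2)
  | tMeet t1 t2 => meet (eval a t1) (eval a t2)
  | tDiff t1 t2 => diff (eval a t1) (eval a t2)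
  end.

Definition generated_by (n : nat) (L : coHeytingAlgebra)
  (a : forall i : nat, i < n -> L) : Prop :=
  forall x : L, exists t : term n, eval a t = x.

Definition is_filter (L : coHeytingAlgebra) (F : L -> Prop) : Prop :=
  F (one L) /\
  (forall x y, le x y -> F x -> F y) /\
  (forall x y, F x -> F y -> F (meet x y)).

Definition is_prime_filter (L : coHeytingAlgebra) (F : L -> Prop) : Prop :=
  is_filter F /\ ~ F (zero L) /\
  (forall x y, F (join x y) -> F x \/ F y).

Definition strict_incl (L : coHeytingAlgebra) (P Q : L -> Prop) : Prop :=
  (forall x, P x -> Q x) /\ exists x, Q x /\ ~ P x.

(* height_ge k p  <->  height p >= k  (for finite k), following the
   foundation-rank clause: rank >= k+1 iff some strictly smaller prime
   filter has rank >= k. *)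
Fixpoint height_ge (L : coHeytingAlgebra) (k : nat) (p : L -> Prop) : Prop :=
  match k with
  | O => True
  | S k' => exists q : L -> Prop,
      is_prime_filter q /\ strict_incl q p /\ height_ge k' q
  end.

(* codim_L a >= d : every prime filter containing a has height >= d
   (min over an empty set is +infinity). *)
Definition codim_ge (L : coHeytingAlgebra) (d : nat) (a : L) : Prop :=
  forall p : L -> Prop, is_prime_filter p -> p a -> height_ge d p.

Definition dL (L : coHeytingAlgebra) (d : nat) : L -> Prop := codim_ge d.

From Stdlib Require Import Classical List Arith Lia FunctionalExtensionality PropExtensionality.
From mathcomp Require classical_sets.
Import ListNotations.

(* A prime filter contains [eps (S d)] iff it lies strictly above a prime filter
   containing [eps d]; by induction every prime filter [p] contains [eps d] iff
   height p >= d, and prime separation turns this into [dL = down-set of eps d].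

   The term [eps (S d)] can only be built because prime filters of height < k are
   determined by the finite list [test_terms k]: if [v] has height < k and [u]
   contains the same test terms as [v], then [u] and [v] contain the same terms.
   This is shown by induction on terms for a back-and-forth invariant: a prime
   [q] containing [t1 - t2] has a prime below it containing [t1] but not [t2],
   and the split terms [/\ pos - \/ neg] transport such primes between [u] and
   [v]; below [v] heights drop, so the induction on [k] applies there.

   Given [q] of height >= d strictly below [p], shrink it to a minimal prime [q']
   containing [eps d]; [q'] has height exactly d, so [p] and [q'] differ on a test
   term, whence the join [psi] of the test terms outside [q'] lies in [p] and
   [p] contains [psi /\ (eps d - psi)]. *)

Definition subpred {T : Type} (A B : T -> Prop) : Prop := forall x, A x -> B x.

Definition chain {T : Type} (C : (T -> Prop) -> Prop) : Prop :=
  forall J K, C J -> C K -> subpred J K \/ subpred K J.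

Definition union {T : Type} (C : (T -> Prop) -> Prop) (x : T) : Prop :=
  exists J, C J /\ J x.

Definition inter {T : Type} (C : (T -> Prop) -> Prop) (x : T) : Prop :=
  forall J, C J -> J x.

Lemma pred_ext {T : Type} (A B : T -> Prop) : (forall x, A x <-> B x) -> A = B.
Proof.
intro H. apply functional_extensionality; intro x.
apply propositional_extensionality, H.
Qed.

Lemma compl_compl {T : Type} (A : T -> Prop) : (fun x => ~ ~ A x) = A.
Proof. apply pred_ext; intro x; split; [apply NNPP | tauto]. Qed.

(* [Zorn_bigcup] also covers the empty chain, whose union is empty; working
   with the sets [J0 \/ J] instead restores a bottom element. *)
Lemma zorn_above {T : Type} (P : (T -> Prop) -> Prop) (J0 : T -> Prop) :
  P J0 ->
  (forall C, chain C -> C J0 -> (forall J, C J -> P J) -> P (union C)) ->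
  exists A, P A /\ subpred J0 A /\ (forall B, P B -> subpred A B -> subpred B A).
Proof.
intros PJ0 P_union.
pose (widen := fun (J : T -> Prop) x => J0 x \/ J x).
assert (J0_widen : forall J, subpred J0 (widen J)) by (intros J x Hx; left; exact Hx).
destruct (@classical_sets.Zorn_bigcup T (fun J => P (widen J))) as [A [PA A_max]].
- intros F FP F_total.
  pose (C := fun K => K = J0 \/ exists J, F J /\ K = widen J).
  replace (widen (classical_sets.bigcup F (fun X => X))) with (union C).
  + apply P_union.
    * intros K K' [->|[J [FJ ->]]] [->|[J' [FJ' ->]]];
        try (left; apply J0_widen); try (right; apply J0_widen).
      -- left; intros x Hx; exact Hx.
      -- destruct (F_total J J' FJ FJ') as [S|S];
           [left|right]; intros x [Hx|Hx]; (left; exact Hx) || (right; apply S, Hx).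
    * left; reflexivity.
    * intros K [->|[J [FJ ->]]]; [exact PJ0 | apply FP, FJ].
  + apply pred_ext; intro x. split.
    * intros [K [[->|[J [FJ ->]]] Kx]]; [left; exact Kx|].
      destruct Kx as [Kx|Kx]; [left; exact Kx | right; exists J; assumption].
    * intros [Hx|[J FJ Jx]]; [exists J0; split; [left|]; auto|].
      exists (widen J); split; [right; exists J; auto | right; exact Jx].
- exists (widen A). split; [exact PA | split; [apply J0_widen|]].
  intros B PB AB x Bx. apply NNPP; intro nx.
  apply (A_max B).
  + split.
    * intros y Ay. apply AB; right; exact Ay.
    * intro BA. apply nx; right; apply BA, Bx.
  + replace (widen B) with B; [exact PB|].
    apply pred_ext; intro y; split; [intro; right; assumption|].
    intros [Hy|Hy]; [apply AB, J0_widen, Hy | exact Hy].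
Qed.

Lemma zorn_below {T : Type} (P : (T -> Prop) -> Prop) (J0 : T -> Prop) :
  P J0 ->
  (forall C, chain C -> C J0 -> (forall J, C J -> P J) -> P (inter C)) ->
  exists A, P A /\ subpred A J0 /\ (forall B, P B -> subpred B A -> subpred A B).
Proof.
intros PJ0 P_inter.
destruct (zorn_above (fun J => P (fun x => ~ J x)) (fun x => ~ J0 x))
  as [A [PA [J0A A_max]]].
- rewrite compl_compl; exact PJ0.
- intros C C_chain CJ0 CP.
  replace (fun x => ~ union C x) with (inter (fun K => C (fun x => ~ K x))).
  + apply P_inter.
    * intros K K' CK CK'. destruct (C_chain _ _ CK CK') as [S|S];
        [right|left]; intros x Kx; apply NNPP; intro nKx; exact (S x nKx Kx).
    * exact CJ0.
    * intros K CK. rewrite <- (compl_compl K). apply CP, CK.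
  + apply pred_ext; intro x; unfold inter; split.
    * intros Hx [J [CJ Jx]]. rewrite <- (compl_compl J) in CJ. exact (Hx _ CJ Jx).
    * intros Hx K CK. apply NNPP; intro nKx. apply Hx. exists (fun y => ~ K y); auto.
- exists (fun x => ~ A x). split; [exact PA | split].
  + intros x nAx. apply NNPP; intro nJ0x. exact (nAx (J0A x nJ0x)).
  + intros B PB BA x nAx. apply NNPP; intro nBx.
    apply nAx, (A_max (fun y => ~ B y)); [rewrite compl_compl; exact PB | | exact nBx].
    intros y Ay By. exact (BA y By Ay).
Qed.

Section Lattice.
Context {L : coHeytingAlgebra}.
Implicit Types x y z j : L.

Lemma meet_idem x : meet x x = x.
Proof. rewrite <- (join_meet_absorb x x) at 2. apply meet_join_absorb. Qed.

Lemma le_refl x : le x x.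
Proof. apply meet_idem. Qed.

Lemma le_trans x y z : le x y -> le y z -> le x z.
Proof. unfold le; intros Hxy Hyz. rewrite <- Hxy, <- meetA, Hyz. reflexivity. Qed.

Lemma le_join_iff x y : le x y <-> join x y = y.
Proof.
unfold le; split; intro H.
- rewrite <- H, joinC, meetC. apply join_meet_absorb.
- rewrite <- H. apply meet_join_absorb.
Qed.

Lemma meet_lb_l x y : le (meet x y) x.
Proof. unfold le. rewrite (meetC x y), <- meetA, meet_idem. reflexivity. Qed.

Lemma meet_lb_r x y : le (meet x y) y.
Proof. rewrite meetC. apply meet_lb_l. Qed.

Lemma join_ub_l x y : le x (join x y).
Proof. apply meet_join_absorb. Qed.

Lemma join_ub_r x y : le y (join x y).
Proof. rewrite joinC. apply join_ub_l. Qed.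

Lemma meet_glb x y z : le z x -> le z y -> le z (meet x y).
Proof. unfold le; intros Hx Hy. rewrite meetA, Hx, Hy. reflexivity. Qed.

Lemma join_lub x y z : le x z -> le y z -> le (join x y) z.
Proof. rewrite !le_join_iff; intros Hx Hy. rewrite <- joinA, Hy, Hx. reflexivity. Qed.

Lemma le_one x : le x (one L).
Proof. apply meet1. Qed.

Lemma le_zero x : le (zero L) x.
Proof. apply le_join_iff. rewrite joinC. apply join0. Qed.

Lemma join_mono x y x' y' : le x x' -> le y y' -> le (join x y) (join x' y').
Proof.
intros Hx Hy. apply join_lub.
- apply le_trans with x'; [exact Hx | apply join_ub_l].
- apply le_trans with y'; [exact Hy | apply join_ub_r].
Qed.

Lemma join_meet_distr j x y : meet (join j x) (join j y) = join j (meet x y).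
Proof.
rewrite meet_join_distr, (meetC (join j x) j), meet_join_absorb.
rewrite (meetC (join j x) y), meet_join_distr.
rewrite joinA, (meetC y j), join_meet_absorb, (meetC y x). reflexivity.
Qed.

Lemma diff_le x y : le x (join y (diff x y)).
Proof. apply diff_cover. Qed.

Lemma diff_least x y z : le x (join y z) -> le (diff x y) z.
Proof. apply diff_min. Qed.

End Lattice.

Section PrimeFilters.
Context {L : coHeytingAlgebra}.
Implicit Types x y z e : L.
Implicit Types p q : L -> Prop.
Notation prime := (@is_prime_filter L).

Definition is_ideal (I : L -> Prop) : Prop :=
  I (zero L) /\
  (forall x y, le x y -> I y -> I x) /\
  (forall x y, I x -> I y -> I (join x y)).

Section Prime.
Context {p : L -> Prop} (P : prime p).

Lemma prime_one : p (one L).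
Proof. apply P. Qed.

Lemma prime_zero : ~ p (zero L).
Proof. apply P. Qed.

Lemma prime_up x y : le x y -> p x -> p y.
Proof. apply P. Qed.

Lemma prime_meet_iff x y : p (meet x y) <-> p x /\ p y.
Proof.
split.
- intro H; split; [apply (prime_up _ _ (meet_lb_l x y)) | apply (prime_up _ _ (meet_lb_r x y))];
    exact H.
- intros [Hx Hy]. apply P; assumption.
Qed.

Lemma prime_join_iff x y : p (join x y) <-> p x \/ p y.
Proof.
split; [apply P|].
intros [H|H]; [apply (prime_up _ _ (join_ub_l x y)) | apply (prime_up _ _ (join_ub_r x y))];
  exact H.
Qed.

End Prime.

Lemma ideal_chain_union C I0 :
  chain C -> C I0 -> (forall I, C I -> is_ideal I) -> is_ideal (union C).
Proof.
intros C_chain CI0 C_ideal. split; [|split].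
- exists I0; split; [exact CI0 | apply (C_ideal _ CI0)].
- intros x y Hxy [I [CI Iy]]. exists I; split; [exact CI|]. apply (C_ideal _ CI) with y; auto.
- intros x y [I [CI Ix]] [I' [CI' I'y]].
  destruct (C_chain _ _ CI CI') as [S|S].
  + exists I'; split; [exact CI'|]. apply (C_ideal _ CI'); [apply S|]; assumption.
  + exists I; split; [exact CI|]. apply (C_ideal _ CI); [|apply S]; assumption.
Qed.

Lemma prime_chain_inter C p0 :
  chain C -> C p0 -> (forall p, C p -> prime p) -> prime (inter C).
Proof.
intros C_chain Cp0 C_prime. split; [split; [|split]|split].
- intros p Cp. apply (prime_one (C_prime _ Cp)).
- intros x y Hxy Hx p Cp. apply (prime_up (C_prime _ Cp) x); [exact Hxy | apply Hx, Cp].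
- intros x y Hx Hy p Cp. apply (prime_meet_iff (C_prime _ Cp)).
  split; [apply Hx | apply Hy]; exact Cp.
- intro H. apply (prime_zero (C_prime _ Cp0)), H, Cp0.
- intros x y Hxy. apply NNPP; intro H.
  apply not_or_and in H as [Hx Hy].
  apply not_all_ex_not in Hx as [p Hp]. apply imply_to_and in Hp as [Cp npx].
  apply not_all_ex_not in Hy as [q Hq]. apply imply_to_and in Hq as [Cq nqy].
  destruct (C_chain _ _ Cp Cq) as [S|S].
  + destruct (proj1 (prime_join_iff (C_prime _ Cp) x y) (Hxy p Cp)) as [H|H];
      [exact (npx H) | exact (nqy (S y H))].
  + destruct (proj1 (prime_join_iff (C_prime _ Cq) x y) (Hxy q Cq)) as [H|H];
      [exact (npx (S x H)) | exact (nqy H)].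
Qed.

(* For [z] outside [A], maximality puts [x] into the ideal generated by [A] and [z],
   i.e. [x <= j \/ z] for some [j] in [A]. *)
Lemma maximal_ideal_compl_prime (A : L -> Prop) x :
  is_ideal A -> ~ A x ->
  (forall B, is_ideal B -> ~ B x -> subpred A B -> subpred B A) ->
  prime (fun z => ~ A z).
Proof.
intros [A0 [A_down A_join]] nAx A_max.
assert (A_adjoin : forall z, ~ A z -> exists j, A j /\ le x (join j z)).
{ intros z nAz. apply NNPP; intro H. apply nAz.
  apply (A_max (fun u => exists j, A j /\ le u (join j z))).
  - split; [|split].
    + exists (zero L); split; [exact A0 | apply le_zero].
    + intros u v Huv [j [Aj Hv]]. exists j; split; [exact Aj | apply le_trans with v; auto].
    + intros u v [j [Aj Hu]] [j' [Aj' Hv]]. exists (join j j'); split; [apply A_join; auto|].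
      apply join_lub.
      * apply le_trans with (join j z); [exact Hu | apply join_mono; [apply join_ub_l | apply le_refl]].
      * apply le_trans with (join j' z); [exact Hv | apply join_mono; [apply join_ub_r | apply le_refl]].
  - exact H.
  - intros u Au. exists u; split; [exact Au | apply join_ub_l].
  - exists (zero L); split; [exact A0|]. rewrite joinC, join0. apply le_refl. }
split; [split; [|split]|split].
- intro A1. apply nAx, A_down with (one L); [apply le_one | exact A1].
- intros y z Hyz nAy Az. apply nAy, A_down with z; assumption.
- intros y z nAy nAz Ayz.
  destruct (A_adjoin y nAy) as [j [Aj Hj]], (A_adjoin z nAz) as [j' [Aj' Hj']].
  apply nAx, A_down with (join (join j j') (meet y z)); [|apply A_join; [apply A_join|]; assumption].
  rewrite <- join_meet_distr. apply meet_glb.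
  + apply le_trans with (join j y); [exact Hj | apply join_mono; [apply join_ub_l | apply le_refl]].
  + apply le_trans with (join j' z); [exact Hj' | apply join_mono; [apply join_ub_r | apply le_refl]].
- intro H. exact (H A0).
- intros y z H. apply NNPP; intro K. apply H, A_join; apply NNPP; intro K'; apply K; auto.
Qed.

Lemma prime_avoiding_ideal I x :
  is_ideal I -> ~ I x -> exists q, prime q /\ q x /\ (forall z, I z -> ~ q z).
Proof.
intros I_ideal nIx.
destruct (zorn_above (fun J => is_ideal J /\ ~ J x) I) as [A [[A_ideal nAx] [IA A_max]]].
- split; assumption.
- intros C C_chain CI C_good. split.
  + apply (ideal_chain_union C I); auto. intros J CJ; apply C_good, CJ.
  + intros [J [CJ Jx]]. apply (C_good J CJ), Jx.
- exists (fun z => ~ A z). split; [|split].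
  + apply (maximal_ideal_compl_prime A x); [exact A_ideal | exact nAx|].
    intros B B_ideal nBx. apply A_max; split; assumption.
  + exact nAx.
  + intros z Iz nAz. apply nAz, IA, Iz.
Qed.

Lemma prime_separation x y : ~ le x y -> exists p, prime p /\ p x /\ ~ p y.
Proof.
intro nxy.
destruct (prime_avoiding_ideal (fun z => le z y) x) as [p [P [px Hp]]]; [| exact nxy |].
- split; [apply le_zero | split].
  + intros u v Huv Hv. apply le_trans with v; assumption.
  + intros u v Hu Hv. apply join_lub; assumption.
- exists p; split; [exact P | split; [exact px | apply Hp, le_refl]].
Qed.

(* [q] avoids the ideal generated by [y] and the complement of [p]. *)
Lemma prime_diff_below p x y :
  prime p -> p (diff x y) -> exists q, prime q /\ subpred q p /\ q x /\ ~ q y.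
Proof.
intros P pxy.
destruct (prime_avoiding_ideal (fun z => exists w, ~ p w /\ le z (join y w)) x)
  as [q [Q [qx Hq]]].
- split; [|split].
  + exists (zero L); split; [apply (prime_zero P) | apply le_zero].
  + intros u v Huv [w [npw Hv]]. exists w; split; [exact npw | apply le_trans with v; assumption].
  + intros u v [w [npw Hu]] [w' [npw' Hv]]. exists (join w w'); split.
    * intro H. apply (prime_join_iff P) in H as [H|H]; auto.
    * apply join_lub.
      -- apply le_trans with (join y w); [exact Hu | apply join_mono; [apply le_refl | apply join_ub_l]].
      -- apply le_trans with (join y w'); [exact Hv | apply join_mono; [apply le_refl | apply join_ub_r]].
- intros [w [npw Hx]]. apply npw, (prime_up P (diff x y)); [apply diff_least, Hx | exact pxy].
- exists q. split; [exact Q | split; [|split; [exact qx|]]].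
  + intros z qz. apply NNPP; intro npz. apply (Hq z); [|exact qz].
    exists z; split; [exact npz | apply join_ub_r].
  + apply Hq. exists (zero L); split; [apply (prime_zero P)|]. rewrite join0. apply le_refl.
Qed.

Lemma prime_diff_above p q x y :
  prime q -> subpred q p -> q x -> ~ q y -> p (diff x y).
Proof.
intros Q qp qx nqy. apply qp.
destruct (proj1 (prime_join_iff Q y (diff x y))) as [H|H].
- apply (prime_up Q x); [apply diff_le | exact qx].
- contradiction.
- exact H.
Qed.

Lemma minimal_prime_below q e :
  prime q -> q e ->
  exists q', prime q' /\ subpred q' q /\ q' e /\
    (forall q'', prime q'' -> q'' e -> subpred q'' q' -> subpred q' q'').
Proof.
intros Q qe.
destruct (zorn_below (fun p => prime p /\ p e) q) as [A [[A_prime Ae] [Aq A_min]]].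
- split; assumption.
- intros C C_chain Cq C_good. split.
  + apply (prime_chain_inter C q); auto. intros p Cp; apply C_good, Cp.
  + intros p Cp. apply C_good, Cp.
- exists A. split; [exact A_prime | split; [exact Aq | split; [exact Ae|]]].
  intros q'' Q'' q''e. apply A_min; split; assumption.
Qed.

End PrimeFilters.

Section Terms.
Variable n : nat.

Definition bigmeet (l : list (term n)) : term n := fold_right (@tMeet n) (tOne n) l.
Definition bigjoin (l : list (term n)) : term n := fold_right (@tJoin n) (tZero n) l.

Fixpoint vars_below (k : nat) : list (term n) :=
  match k with
  | 0 => []
  | S k' =>
      match lt_dec k' n with
      | left H => tVar H :: vars_below k'
      | right _ => vars_below k'
      end
  end.

Definition vars : list (term n) := vars_below n.

Lemma In_vars_below k i (H : i < n) : i < k -> In (tVar H) (vars_below k).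
Proof.
induction k as [|k IH]; intro Hik; [lia|]. simpl.
destruct (lt_dec k n) as [Hk|Hk].
- destruct (Nat.eq_dec i k) as [->|Hne].
  + left. f_equal. apply Peano_dec.le_unique.
  + right. apply IH. lia.
- apply IH. lia.
Qed.

Lemma In_vars i (H : i < n) : In (tVar H) vars.
Proof. apply In_vars_below, H. Qed.

Fixpoint splittings (l : list (term n)) : list (list (term n) * list (term n)) :=
  match l with
  | [] => [([], [])]
  | t :: l' => map (fun s => (t :: fst s, snd s)) (splittings l') ++
               map (fun s => (fst s, t :: snd s)) (splittings l')
  end.

Lemma splittings_cover l s :
  In s (splittings l) -> forall t, In t l -> In t (fst s) \/ In t (snd s).
Proof.
revert s; induction l as [|t0 l IH]; intros s Hs t Ht; [destruct Ht|].
simpl in Hs. apply in_app_or in Hs as [Hs|Hs]; apply in_map_iff in Hs as [s' [<- Hs']];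
  simpl; destruct Ht as [->|Ht]; auto; destruct (IH s' Hs' t Ht); auto.
Qed.

Lemma splittings_exist (Q : term n -> Prop) l :
  exists s, In s (splittings l) /\
    (forall t, In t (fst s) -> Q t) /\ (forall t, In t (snd s) -> ~ Q t).
Proof.
induction l as [|t0 l IH].
- exists ([], []). split; [left; reflexivity | split; intros t []].
- destruct IH as [s [Hs [Hpos Hneg]]]. destruct (classic (Q t0)) as [Qt0|Qt0].
  + exists (t0 :: fst s, snd s). split.
    * simpl; apply in_or_app; left; apply in_map_iff; eauto.
    * simpl; split; [intros t [<-|Ht]|]; auto.
  + exists (fst s, t0 :: snd s). split.
    * simpl; apply in_or_app; right; apply in_map_iff; eauto.
    * simpl; split; [|intros t [<-|Ht]]; auto.
Qed.

Definition split_term (s : list (term n) * list (term n)) : term n :=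
  tDiff (bigmeet (fst s)) (bigjoin (snd s)).

Definition saturate (l : list (term n)) : list (term n) :=
  l ++ map split_term (splittings l).

Lemma incl_saturate l : incl l (saturate l).
Proof. apply incl_appl, incl_refl. Qed.

Lemma split_term_in_saturate l s : In s (splittings l) -> In (split_term s) (saturate l).
Proof. intro Hs. apply in_or_app; right; apply in_map, Hs. Qed.

Fixpoint test_terms (k : nat) : list (term n) :=
  match k with
  | 0 => vars
  | S k' => saturate (saturate (test_terms k'))
  end.

Lemma vars_incl_test_terms k : incl vars (test_terms k).
Proof.
induction k as [|k IH]; simpl; [apply incl_refl|].
apply incl_tran with (test_terms k); [exact IH|].
apply incl_tran with (saturate (test_terms k)); apply incl_saturate.
Qed.

Fixpoint eps (d : nat) : term n :=
  match d with
  | 0 => tOne n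
  | S d' => bigjoin (map (fun s => tMeet (bigjoin (snd s)) (tDiff (eps d') (bigjoin (snd s))))
                         (splittings (test_terms d)))
  end.

End Terms.

Arguments vars {n}.
Arguments bigmeet {n}.
Arguments bigjoin {n}.
Arguments splittings {n}.
Arguments split_term {n}.
Arguments saturate {n}.
Arguments test_terms {n}.
Arguments eps {n}.

Section Semantics.
Context {n : nat} {L : coHeytingAlgebra} (a : forall i : nat, i < n -> L).
Notation ev := (eval a).
Notation prime := (@is_prime_filter L).
Implicit Types p q r u v w : L -> Prop.

Lemma prime_bigmeet p l : prime p -> (p (ev (bigmeet l)) <-> forall t, In t l -> p (ev t)).
Proof.
intro P. induction l as [|t l IH]; simpl.
- split; [intros _ t [] | intros _; apply (prime_one P)].
- rewrite (prime_meet_iff P), IH. split.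
  + intros [Ht Hl] t' [<-|Ht']; auto.
  + intro H; split; auto.
Qed.

Lemma prime_bigjoin p l : prime p -> (p (ev (bigjoin l)) <-> exists t, In t l /\ p (ev t)).
Proof.
intro P. induction l as [|t l IH]; simpl.
- split; [intro H; destruct (prime_zero P H) | intros [t [[] _]]].
- rewrite (prime_join_iff P), IH. split.
  + intros [H|[t' [Ht' H]]]; eauto.
  + intros [t' [[<-|Ht'] H]]; eauto.
Qed.

Definition matches u (s : list (term n) * list (term n)) : Prop :=
  (forall t, In t (fst s) -> u (ev t)) /\ (forall t, In t (snd s) -> ~ u (ev t)).

Definition agree_on (l : list (term n)) u v : Prop :=
  forall t, In t l -> (u (ev t) <-> v (ev t)).

Definition agree_all u v : Prop := forall t, u (ev t) <-> v (ev t).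

Lemma agree_on_sym l u v : agree_on l u v -> agree_on l v u.
Proof. intros H t Ht. symmetry; apply H, Ht. Qed.

Lemma agree_on_incl l l' u v : incl l l' -> agree_on l' u v -> agree_on l u v.
Proof. intros Hl H t Ht. apply H, Hl, Ht. Qed.

Lemma matching_splitting u l : exists s, In s (splittings l) /\ matches u s.
Proof. apply (splittings_exist _ (fun t => u (ev t))). Qed.

Lemma matches_agree_on l s u v :
  In s (splittings l) -> matches u s -> matches v s -> agree_on l u v.
Proof.
intros Hs [Upos Uneg] [Vpos Vneg] t Ht. destruct (splittings_cover _ _ _ Hs _ Ht) as [H|H].
- split; intros _; auto.
- split; intro K; [destruct (Uneg t H K) | destruct (Vneg t H K)].
Qed.

Lemma prime_split_term p s :
  prime p -> (p (ev (split_term s)) <-> exists u, prime u /\ subpred u p /\ matches u s).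
Proof.
intro P. unfold split_term; simpl. split.
- intro H. destruct (prime_diff_below _ _ _ P H) as [u [U [up [Upos Uneg]]]].
  exists u. split; [exact U | split; [exact up | split]].
  + apply (prime_bigmeet _ _ U), Upos.
  + intros t Ht Hu. apply Uneg, (prime_bigjoin _ _ U). eauto.
- intros [u [U [up [Upos Uneg]]]]. apply (prime_diff_above _ u _ _ U up).
  + apply (prime_bigmeet _ _ U), Upos.
  + intro H. apply (prime_bigjoin _ _ U) in H as [t [Ht H]]. exact (Uneg t Ht H).
Qed.

(* The split term of the type of [v] over [l] lies in [r], hence in [w], and a prime
   below [w] witnessing it has the type of [v]. *)
Lemma saturate_back l w r v :
  prime w -> prime r -> agree_on (saturate l) w r -> prime v -> subpred v r ->
  exists u, prime u /\ subpred u w /\ agree_on l u v.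
Proof.
intros W R wr V vr. destruct (matching_splitting v l) as [s [Hs Vs]].
assert (rs : r (ev (split_term s))).
{ apply (prime_split_term _ _ R). exists v; auto. }
apply (wr _ (split_term_in_saturate _ _ _ Hs)), (prime_split_term _ _ W) in rs.
destruct rs as [u [U [uw Us]]].
exists u. split; [exact U | split; [exact uw|]]. apply (matches_agree_on _ s); assumption.
Qed.

Definition determines (l : list (term n)) (d : nat) : Prop :=
  forall u v, prime u -> prime v -> ~ height_ge d v -> agree_on l u v -> agree_all u v.

Section Bisimulation.
Variables (l : list (term n)) (d : nat) (r : L -> Prop).
Hypotheses (vars_l : incl vars l) (det_l : determines l d)
  (R : prime r) (r_low : ~ height_ge (S d) r).

Definition related w : Prop :=
  prime w /\ agree_on (saturate l) w r /\
  (forall u, prime u -> subpred u w ->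
     exists v, prime v /\ subpred v r /\ agree_on (saturate l) u v).

Lemma strictly_below_low v : prime v -> subpred v r -> ~ subpred r v -> ~ height_ge d v.
Proof.
intros V vr nrv hv. apply r_low. exists v. split; [exact V | split; [split|exact hv]].
- exact vr.
- apply NNPP; intro H. apply nrv. intros x rx. apply NNPP; intro nvx. apply H. eauto.
Qed.

Lemma related_forth w u :
  related w -> prime u -> subpred u w ->
  related u \/ exists v, prime v /\ subpred v r /\ agree_all u v.
Proof.
intros [W [wr w_forth]] U uw. destruct (w_forth u U uw) as [v [V [vr uv]]].
destruct (classic (subpred r v)) as [rv|nrv].
- left. split; [exact U | split].
  + intros t Ht. rewrite (uv t Ht). split; [apply vr | apply rv].
  + intros u' U' u'u. apply w_forth; [exact U'|]. intros x Hx. apply uw, u'u, Hx.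
- right. exists v. split; [exact V | split; [exact vr|]].
  apply det_l; [exact U | exact V | apply strictly_below_low; assumption |].
  apply agree_on_incl with (saturate l); [apply incl_saturate | exact uv].
Qed.

Lemma related_back w v :
  related w -> prime v -> subpred v r -> ~ subpred r v ->
  exists u, prime u /\ subpred u w /\ agree_all u v.
Proof.
intros [W [wr _]] V vr nrv.
destruct (saturate_back l w r v W R wr V vr) as [u [U [uw uv]]].
exists u. split; [exact U | split; [exact uw|]].
apply det_l; [exact U | exact V | apply strictly_below_low; assumption | exact uv].
Qed.

Lemma related_agree_all t : forall w, related w -> (w (ev t) <-> r (ev t)).
Proof.
induction t as [i Hi| | |t1 IH1 t2 IH2|t1 IH1 t2 IH2|t1 IH1 t2 IH2];
  intros w Kw; pose proof Kw as [W [wr _]]; simpl.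
- apply (wr (tVar Hi)), incl_saturate, vars_l, In_vars.
- split; intro H; [destruct (prime_zero W H) | destruct (prime_zero R H)].
- split; intros _; [apply (prime_one R) | apply (prime_one W)].
- rewrite (prime_join_iff W), (prime_join_iff R), (IH1 w Kw), (IH2 w Kw). tauto.
- rewrite (prime_meet_iff W), (prime_meet_iff R), (IH1 w Kw), (IH2 w Kw). tauto.
- split.
  + intro H. destruct (prime_diff_below _ _ _ W H) as [u [U [uw [u1 nu2]]]].
    destruct (related_forth w u Kw U uw) as [Ku | [v [V [vr uv]]]].
    * apply (prime_diff_above r r _ _ R (fun _ x => x)).
      -- apply (IH1 u Ku), u1.
      -- rewrite <- (IH2 u Ku). exact nu2.
    * apply (prime_diff_above r v _ _ V vr); [apply uv, u1 | rewrite <- (uv t2); exact nu2].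
  + intro H. destruct (prime_diff_below _ _ _ R H) as [v [V [vr [v1 nv2]]]].
    destruct (classic (subpred r v)) as [rv|nrv].
    * apply (prime_diff_above w w _ _ W (fun _ x => x)).
      -- apply (IH1 w Kw), vr, v1.
      -- rewrite (IH2 w Kw). intro r2. apply nv2, rv, r2.
    * destruct (related_back w v Kw V vr nrv) as [u [U [uw uv]]].
      apply (prime_diff_above w u _ _ U uw); [apply uv, v1 | rewrite (uv t2); exact nv2].
Qed.

End Bisimulation.

Lemma determines_step l d :
  incl vars l -> determines l d -> determines (saturate (saturate l)) (S d).
Proof.
intros vars_l det_l u v U V v_low uv t.
apply (related_agree_all l d v vars_l det_l V v_low).
split; [exact U | split].
- apply agree_on_incl with (saturate (saturate l)); [apply incl_saturate | exact uv].
- intros u' U' u'u.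
  destruct (saturate_back (saturate l) v u u' V U (agree_on_sym _ _ _ uv) U' u'u)
    as [v' [V' [v'v v'u']]].
  exists v'. split; [exact V' | split; [exact v'v | apply agree_on_sym, v'u']].
Qed.

Lemma determines_test_terms k : determines (test_terms k) k.
Proof.
induction k as [|k IH].
- intros u v _ _ v_low. destruct (v_low I).
- apply determines_step; [apply vars_incl_test_terms | exact IH].
Qed.

Section EpsSucc.
Variable d : nat.
Hypothesis eps_d : forall q, prime q -> (q (ev (eps d)) <-> height_ge d q).

Lemma prime_eps_succ p :
  prime p ->
  (p (ev (eps (S d))) <->
   exists s, In s (splittings (test_terms (S d))) /\ p (ev (bigjoin (snd s))) /\
     p (ev (tDiff (eps d) (bigjoin (snd s))))).
Proof.
intro P. simpl eps. rewrite (prime_bigjoin _ _ P). split.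
- intros [t [Ht pt]]. apply in_map_iff in Ht as [s [<- Hs]].
  apply (prime_meet_iff P) in pt. exists s; tauto.
- intros [s [Hs ps]]. eexists; split; [apply in_map_iff; exists s; split; [reflexivity | exact Hs]|].
  apply (prime_meet_iff P), ps.
Qed.

Lemma eps_succ_height p : prime p -> p (ev (eps (S d))) -> height_ge (S d) p.
Proof.
intros P pe. apply (prime_eps_succ p P) in pe as [s [_ [p_psi p_diff]]].
destruct (prime_diff_below _ _ _ P p_diff) as [q [Q [qp [q_eps nq_psi]]]].
exists q. split; [exact Q | split; [split|]].
- exact qp.
- exists (ev (bigjoin (snd s))); auto.
- apply eps_d; assumption.
Qed.

Lemma height_eps_succ (G : generated_by a) p : prime p -> height_ge (S d) p -> p (ev (eps (S d))).
Proof.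
intros P [q [Q [[qp [x [px nqx]]] hq]]].
destruct (minimal_prime_below q (ev (eps d)) Q (proj2 (eps_d q Q) hq))
  as [q' [Q' [q'q [q'_eps q'_min]]]].
assert (q'_low : ~ height_ge (S d) q').
{ intros [q'' [Q'' [[q''q' [z [q'z nq''z]]] hq'']]].
  apply nq''z, (q'_min q'' Q''); [apply (eps_d q'' Q''), hq'' | exact q''q' | exact q'z]. }
destruct (matching_splitting q' (test_terms (S d))) as [s [Hs [q'pos q'neg]]].
assert (nq'_psi : ~ q' (ev (bigjoin (snd s)))).
{ intro H. apply (prime_bigjoin _ _ Q') in H as [t [Ht H]]. exact (q'neg t Ht H). }
assert (p_psi : p (ev (bigjoin (snd s)))).
{ apply NNPP; intro np_psi.
  assert (pq' : agree_on (test_terms (S d)) p q').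
  { apply (matches_agree_on _ s); [exact Hs | split | split; assumption].
    - intros t Ht. apply qp, q'q, q'pos, Ht.
    - intros t Ht pt. apply np_psi, (prime_bigjoin _ _ P). eauto. }
  destruct (G x) as [tx <-].
  apply nqx, q'q, (determines_test_terms (S d) p q' P Q' q'_low pq'), px. }
apply (prime_eps_succ p P). exists s. split; [exact Hs | split; [exact p_psi|]].
apply (prime_diff_above _ q' _ _ Q'); [intros y Hy; apply qp, q'q, Hy | exact q'_eps | exact nq'_psi].
Qed.

End EpsSucc.

Lemma eps_height (G : generated_by a) d p : prime p -> (p (ev (eps d)) <-> height_ge d p).
Proof.
revert p; induction d as [|d IH]; intros p P.
- split; [intros _; exact I | intros _; apply (prime_one P)].
- split; [apply eps_succ_height | apply height_eps_succ]; assumption.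
Qed.

End Semantics.

Theorem proposition8p2 :
  forall n d : nat, 0 < n -> 0 < d ->
  exists t : term n,
    forall (L : coHeytingAlgebra) (a : forall i : nat, i < n -> L),
      generated_by a ->
      forall x : L, dL d x <-> le x (eval a t).
Proof.
intros n d _ _. exists (eps d). intros L a G x. split.
- intro Hx. apply NNPP; intro nle.
  destruct (prime_separation _ _ nle) as [p [P [px np]]].
  apply np, (eps_height a G d p P), Hx; assumption.
- intros Hle p P px. apply (eps_height a G d p P), (prime_up P x); assumption.
Qed.
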